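(* Let $q=2^h$, let $n,s$ be positive integers, $\beta\in\mathbb{F}_{q^n}\setminus\{0,1\}$, and $\epsilon\in\mathbb{F}_{q^n}$ with $\mathrm{Tr}_{q^n/2}(\epsilon)=1$. Then the plane curve $\mathcal{C}_2$ with affine equation $F_2(X,Z)=0$, where \[ F_2(X,Z)=X^2(Z^2+Z+\epsilon)^{q^s}+X\bigl(\beta+\mathrm{Tr}_{q^s/2}(Z^2+Z+\epsilon)\bigr)+Z^2+Z+\epsilon, \] is absolutely irreducible.
   Context: $\mathrm{Tr}_{q^s/2}(Y)=\sum_{i=0}^{hs-1}Y^{2^i}$ (as a polynomial), and $\mathrm{Tr}_{q^n/2}(x)=\sum_{i=0}^{hn-1}x^{2^i}$ is the absolute trace of $\mathbb{F}_{q^n}$. Absolutely irreducible means irreducible over the algebraic closure of $\mathbb{F}_{q^n}$. *)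

From mathcomp Require Import all_boot all_order all_algebra all_field.
Set Implicit Arguments. Unset Strict Implicit. Unset Printing Implicit Defensive.
Import GRing.Theory.
Local Open Scope ring_scope.

(* Applied to L[Z][X] = {poly {poly L}},
   whose units are the nonzero constants, this is irreducibility of a
   bivariate polynomial in L[X,Z]. *)
Definition irreducible_elt (R : idomainType) (p : R) : Prop :=
  [/\ p != 0, p \isn't a GRing.unit &
      forall a b : R, p = a * b -> a \is a GRing.unit \/ b \is a GRing.unit].

(* Tr(x) = sum_{i < m} x^(2^i)  (absolute trace when m = [K:F_2]). *)
Definition trace2 (R : nzRingType) (m : nat) (x : R) : R :=
  \sum_(i < m) x ^+ (2 ^ i).

(* F_2(X,Z) as an element of F[Z][X]; the inner variable is Z, the outer X. *)
Definition F2poly (F : fieldType) (q s h : nat) (beta eps : F)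
  : {poly {poly F}} :=
  let T : {poly F} := 'X ^+ 2 + 'X + eps%:P in
  'X ^+ 2 * (T ^+ (q ^ s))%:P
  + 'X * (beta%:P + trace2 (h * s) T)%:P
  + T%:P.

(* Absolutely irreducible: irreducible over every algebraically closed
   field extension L of F (equivalently, over an algebraic closure). *)
Definition abs_irreducible2 (F : fieldType) (P : {poly {poly F}}) : Prop :=
  forall (L : closedFieldType) (f : {rmorphism F -> L}),
    irreducible_elt (map_poly (map_poly f) P).

From mathcomp Require Import all_boot all_order all_algebra all_field.
From mathcomp Require Import ring zify.
Set Implicit Arguments. Unset Strict Implicit. Unset Printing Implicit Defensive.
Import GRing.Theory.
Local Open Scope ring_scope.

(* Over an algebraically closed L of characteristic 2, write T = Z^2 + Z + eps =
   (Z - a)(Z - a - 1) and read F_2 as the quadratic A X^2 + B X + T over L[Z],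
   with A = T^(q^s) = T^(2^m) and B = beta + Tr(T).  Since B equals beta at both
   roots of T, T and B are coprime, so F_2 has no factor free of X.  A splitting
   into two factors linear in X gives B = U + V with U V = T A = (Z - a)^k (Z - a - 1)^k,
   k = 2^m + 1.  As B does not vanish at a, a + 1 and deg B < 2k, the pair {U, V}
   must be {c (Z - a)^k, c^-1 (Z - a - 1)^k}; evaluating at a and a + 1 then gives
   beta^2 = 1, i.e. beta = 1. *)

Lemma rmorph_trace2 (R S : nzRingType) (f : {rmorphism R -> S}) m x :
  f (trace2 m x) = trace2 m (f x).
Proof. by rewrite rmorph_sum; apply: eq_bigr => i _; rewrite rmorphXn. Qed.

Lemma trace2_0 (R : nzRingType) m : trace2 m (0 : R) = 0.
Proof. by rewrite /trace2 big1 // => i _; rewrite expr0n expn_eq0. Qed.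

Lemma size_trace2_leq (R : nzRingType) m (p : {poly R}) :
  (size (trace2 m p) <= ((size p).-1 * 2 ^ m).+1)%N.
Proof.
apply: leq_trans (size_sum _ _ _) _; apply/bigmax_leqP => i _.
apply: leq_trans (size_poly_exp_leq _ _) _.
by rewrite ltnS leq_mul2l leq_exp2l // ltnW ?orbT.
Qed.

Lemma horner_trace2 (R : comNzRingType) m (p : {poly R}) z :
  (trace2 m p).[z] = trace2 m p.[z].
Proof. by rewrite horner_sum; apply: eq_bigr => i _; rewrite horner_exp. Qed.

Section ComplementaryFactors.
Variable L : fieldType.
Implicit Types (a b : L) (U V W : {poly L}).

Lemma exp_XsubC_dvdp_cofactor k a U V W :
  U * V = ('X - a%:P) ^+ k * W -> ~~ root U a -> ('X - a%:P) ^+ k %| V.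
Proof.
move=> UV_eq Ua; rewrite -(Gauss_dvdpr _ (_ : coprimep _ U)) ?UV_eq ?dvdp_mulr //.
by apply: coprimep_expl; rewrite coprimep_sym coprimep_XsubC.
Qed.

Lemma horner_mul_eq1 U V x y : U * V = 1 -> U.[x] * V.[y] = 1.
Proof.
move=> UV1.
have [U_unit V_unit] : U \is a GRing.unit /\ V \is a GRing.unit.
  by split; apply/unitrP; [exists V | exists U]; rewrite [V * U]mulrC UV1.
move: U_unit V_unit UV1; rewrite !poly_unitE => /andP[/size_poly1P[c _ ->] _].
move=> /andP[/size_poly1P[d _ ->] _].
by rewrite -polyCM -polyC1 => /polyC_inj; rewrite !hornerC.
Qed.

Lemma size_mul_leq_size_add U V :
  (1 < size (U * V)%R)%N -> U * V %| U -> (size (U * V)%R <= size (U + V)%R)%N.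
Proof.
move=> sUV UV_dvd_U; have /dvdpP[w U_eq] := UV_dvd_U.
have U_neq0 : U != 0 by apply: contraTneq sUV => ->; rewrite mul0r size_poly0.
have wV : w * V = 1.
  by apply: (mulIf U_neq0); rewrite mul1r -mulrA [V * U]mulrC -U_eq.
have /andP[/eqP sV _] : V \is a GRing.unit.
  by apply/unitrP; exists w; rewrite [V * w]mulrC wV.
have sU := dvdp_leq U_neq0 UV_dvd_U.
by rewrite size_polyDl ?sV //; apply: leq_trans sUV sU.
Qed.

Lemma horner_complementary_factors k a b U V :
  a != b -> (0 < k)%N -> U * V = ('X - a%:P) ^+ k * ('X - b%:P) ^+ k ->
  (size (U + V)%R <= 2 * k)%N -> (U + V).[a] != 0 -> (U + V).[b] != 0 ->
  (U + V).[a] * (U + V).[b] = (- (a - b) ^+ 2) ^+ k.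
Proof.
set Pa := ('X - a%:P) ^+ k; set Pb := ('X - b%:P) ^+ k => ab k_gt0 UV_eq.
have PaPb_neq0 : Pa * Pb != 0 by rewrite mulf_neq0 // expf_neq0 // polyXsubC_eq0.
have UVa : U.[a] * V.[a] = 0.
  rewrite -hornerM UV_eq hornerM !horner_exp hornerXsubC subrr.
  by rewrite expr0n gtn_eqF ?mul0r.
wlog Ua : U V UV_eq UVa / root U a.
  move=> wlog_Ua; have [|Ua] := boolP (root U a); first exact: wlog_Ua.
  rewrite addrC; apply: wlog_Ua; rewrite 1?mulrC //.
  by move/eqP: UVa; rewrite mulf_eq0 -!rootE (negPf Ua).
rewrite hornerD (rootP Ua) add0r => sUV Va Vb.
have Pa_dvd_U : Pa %| U.
  by apply: (exp_XsubC_dvdp_cofactor (W := Pb) _ Va); rewrite mulrC.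
have [Ub|Ub] := boolP (root U b).
  have Pb_dvd_U : Pb %| U.
    apply: (exp_XsubC_dvdp_cofactor (W := Pa) (U := V)); last first.
      by move: Vb; rewrite hornerD (rootP Ub) add0r.
    by rewrite mulrC UV_eq mulrC.
  have UV_dvd_U : U * V %| U.
    rewrite UV_eq Gauss_dvdp ?Pa_dvd_U ?Pb_dvd_U //.
    by rewrite coprimep_expl // coprimep_expr // coprimep_XsubC2 // subr_eq0 eq_sym.
  have size_UV : size (U * V) = (2 * k + 1)%N.
    by rewrite UV_eq size_mul ?expf_neq0 ?polyXsubC_eq0 // !size_exp_XsubC; lia.
  have := size_mul_leq_size_add _ UV_dvd_U; rewrite size_UV; lia.
have /dvdpP[v V_eq] : Pb %| V.
  by apply: (exp_XsubC_dvdp_cofactor (W := Pa) _ Ub); rewrite UV_eq mulrC.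
case/dvdpP: Pa_dvd_U => u U_eq.
have uv : u * v = 1.
  by apply: (mulIf PaPb_neq0); rewrite mul1r -[RHS]UV_eq U_eq V_eq; ring.
rewrite hornerD U_eq V_eq !hornerM !horner_exp !hornerXsubC subrr expr0n.
rewrite gtn_eqF // mulr0 addr0.
transitivity (u.[b] * v.[a] * ((a - b) * (b - a)) ^+ k); first by rewrite exprMn; ring.
by rewrite horner_mul_eq1 // mul1r; congr (_ ^+ k); ring.
Qed.
End ComplementaryFactors.

Lemma coef_mul_linear (R : comNzRingType) (p q : {poly R}) :
  (size p <= 2)%N -> (size q <= 2)%N ->
  (p * q)`_0 * (p * q)`_2 = (p`_0 * q`_1) * (p`_1 * q`_0) /\
  (p * q)`_1 = p`_0 * q`_1 + p`_1 * q`_0.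
Proof.
move=> sp sq; rewrite !coefM !big_ord_recl !big_ord0 /=.
by rewrite [p`_2]nth_default // [q`_2]nth_default //; split; ring.
Qed.

Lemma quadratic_irreducible_elt (L : fieldType) (P : {poly {poly L}}) :
  size P = 3 -> coprimep P`_0 P`_1 ->
  (forall U V, U * V = P`_0 * P`_2 -> U + V != P`_1) ->
  irreducible_elt P.
Proof.
move=> sP coP no_split; split; first by rewrite -size_poly_eq0 sP.
  by rewrite poly_unitE sP.
have unit_of_constant_factor p q : P = p * q -> size p = 1 -> p \is a GRing.unit.
  move=> P_eq sp; have /size_poly1P[g _ p_eq] : size p == 1 by rewrite sp.
  have /coprimepP/(_ g) : coprimep P`_0 P`_1 by [].
  rewrite P_eq p_eq !coefCM !dvdp_mulr // => /(_ isT isT) /eqp_size.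
  rewrite size_poly1 => /eqP /size_poly1P[c c_neq0 ->].
  by rewrite !rmorph_unit ?unitfE.
move=> p q P_eq.
have [p_neq0 q_neq0] : p != 0 /\ q != 0.
  by apply/andP; rewrite -negb_or -mulf_eq0 -P_eq -size_poly_eq0 sP.
have [sp_gt0 sq_gt0] : (0 < size p)%N /\ (0 < size q)%N by rewrite !size_poly_gt0.
have spq : (size p + size q = 4)%N by move: sP; rewrite P_eq size_mul //; lia.
have [sp|/eqP sp] := eqVneq (size p) 1%N.
  by left; exact: unit_of_constant_factor P_eq sp.
have [sq|/eqP sq] := eqVneq (size q) 1%N.
  by right; apply: (unit_of_constant_factor q p) => //; rewrite mulrC.
have [sp2 sq2] : (size p <= 2)%N /\ (size q <= 2)%N by lia.
have [c02 c1] := coef_mul_linear sp2 sq2.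
by rewrite -P_eq in c02 c1; move: (no_split _ _ (esym c02)); rewrite c1 eqxx.
Qed.

Lemma map_quadratic (R S : nzRingType) (g : {rmorphism R -> S}) (a b c : R) :
  map_poly g ('X ^+ 2 * a%:P + 'X * b%:P + c%:P) =
  'X ^+ 2 * (g a)%:P + 'X * (g b)%:P + (g c)%:P.
Proof. by rewrite !rmorphD !rmorphM /= map_polyX !map_polyC -expr2. Qed.

Lemma map_F2poly (F L : fieldType) (f : {rmorphism F -> L}) q s h beta eps :
  map_poly (map_poly f) (F2poly q s h beta eps) = F2poly q s h (f beta) (f eps).
Proof.
have map_T : map_poly f ('X ^+ 2 + 'X + eps%:P) = 'X ^+ 2 + 'X + (f eps)%:P.
  by rewrite !rmorphD rmorphXn /= map_polyX map_polyC.
rewrite /F2poly map_quadratic rmorphXn /= map_T rmorphD /= map_polyC.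
by rewrite rmorph_trace2 /= map_T.
Qed.

Lemma F2poly_pow2 (F : fieldType) h s (beta eps : F) :
  F2poly (2 ^ h) s h beta eps = F2poly 2 (h * s) 1 beta eps.
Proof. by rewrite /F2poly -expnM mul1n. Qed.

Lemma quadratic_Poly (R : nzRingType) (a b c : R) :
  'X ^+ 2 * a%:P + 'X * b%:P + c%:P = Poly [:: c; b; a].
Proof.
apply/polyP => i; rewrite coef_Poly !coefD coefXnM coefXM !coefC.
by case: i => [|[|[|i]]] //=; rewrite ?add0r ?addr0 // nth_nil.
Qed.

Lemma mul_XsubC_XsubC_add1 (R : comNzRingType) (a : R) : 2 \in [pchar R] ->
  ('X - a%:P) * ('X - (a + 1)%:P) = 'X ^+ 2 + 'X + (a ^+ 2 + a)%:P.
Proof.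
move=> char2; have two_eq0 : 2%:R = 0 :> {poly R}.
  exact: pcharf0 (rmorph_pchar polyC char2).
apply/eqP; rewrite -subr_eq0 !polyCD rmorphXn polyC1.
have -> : ('X - a%:P) * ('X - (a%:P + 1)) - ('X ^+ 2 + 'X + (a%:P ^+ 2 + a%:P)) =
          2%:R * (- (a%:P + 1) * 'X) by ring.
by rewrite two_eq0 mul0r.
Qed.

Lemma artin_schreier_split (L : closedFieldType) (e : L) : 2 \in [pchar L] ->
  exists a, 'X ^+ 2 + 'X + e%:P = ('X - a%:P) * ('X - (a + 1)%:P).
Proof.
move=> char2; set T := 'X ^+ 2 + 'X + e%:P.
have [a Ta] : exists a, root T a.
  have T2 : T`_2 = 1 by rewrite /T !coefD coefXn coefX coefC !addr0.
  apply/closed_rootP/negP => /eqP sT.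
  by move: (oner_neq0 L); rewrite -T2 nth_default ?sT ?eqxx.
have Ta_eq : a ^+ 2 + a + e = 0 by move/rootP: Ta; rewrite /T !hornerE.
exists a; rewrite mul_XsubC_XsubC_add1 // /T; congr (_ + _%:P); apply/eqP.
by rewrite -[a ^+ 2 + a](oppr_pchar2 char2) -addr_eq0 addrC Ta_eq.
Qed.

Lemma F2poly_irreducible (L : closedFieldType) m (beta eps : L) :
  2 \in [pchar L] -> beta != 0 -> beta != 1 -> irreducible_elt (F2poly 2 m 1 beta eps).
Proof.
move=> char2 beta_neq0 beta_neq1; rewrite /F2poly mul1n quadratic_Poly.
set T := 'X ^+ 2 + 'X + eps%:P; set B := beta%:P + trace2 m T.
have [a T_eq] : exists a, T = ('X - a%:P) * ('X - (a + 1)%:P).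
  exact: artin_schreier_split.
have Ta : root T a by rewrite T_eq rootM !root_XsubC eqxx.
have T_neq0 : T != 0 by rewrite T_eq mulf_neq0 ?polyXsubC_eq0.
have Tb : root T (a + 1) by rewrite T_eq rootM !root_XsubC eqxx orbT.
have B_root z : root T z -> B.[z] = beta.
  by move/rootP=> Tz; rewrite /B hornerD hornerC horner_trace2 Tz trace2_0 addr0.
have size_B : (size B <= 2 * (2 ^ m).+1)%N.
  apply: leq_trans (size_polyD _ _) _; rewrite geq_max size_polyC.
  apply/andP; split; first by case: (beta != 0).
  apply: leq_trans (size_trace2_leq _ _) _.
  by rewrite T_eq size_mul ?polyXsubC_eq0 // !size_XsubC; lia.
apply: quadratic_irreducible_elt.
- by rewrite (PolyK (c := 0)) //= expf_neq0.
- rewrite !coef_Poly /= T_eq coprimepMl !(coprimep_sym _ B) !coprimep_XsubC.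
  by rewrite !rootE !B_root ?beta_neq0.
move=> U V; rewrite !coef_Poly /= -exprS T_eq exprMn => UV_eq; apply/eqP => UV_B.
have a_neq_a1 : a != a + 1.
  by rewrite eq_sym -subr_eq0 addrAC subrr add0r oner_neq0.
have := horner_complementary_factors a_neq_a1 (ltn0Sn _) UV_eq.
rewrite UV_B !B_root // => /(_ size_B beta_neq0 beta_neq0).
rewrite opprD addrA subrr add0r sqrrN expr1n (oppr_pchar2 char2) expr1n.
by move/eqP; rewrite -expr2 sqrf_eq1 (oppr_pchar2 char2) orbb (negPf beta_neq1).
Qed.

Unset Implicit Arguments.

Theorem lemma3p11 (h n s : nat) (F : finFieldType) (beta eps : F) :
  (0 < h)%N -> (0 < n)%N -> (0 < s)%N ->
  #|F| = ((2 ^ h) ^ n)%N ->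
  beta != 0 -> beta != 1 ->
  trace2 (h * n) eps = 1 ->
  abs_irreducible2 (F2poly (2 ^ h) s h beta eps).
Proof.
move=> _ _ _ card_F beta_neq0 beta_neq1 _ L f.
have char2 : 2 \in [pchar L].
  by apply: (rmorph_pchar f); apply: (@card_finPcharP _ _ (h * n)); rewrite ?expnM.
rewrite map_F2poly F2poly_pow2.
by apply: F2poly_irreducible; rewrite ?fmorph_eq0 ?fmorph_eq1.
Qed.
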